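(* For $0<|q|<1$, the sequences $$\alpha_n=\frac{(-1)^n\left(q^{(-n^2+n+4)/2}(1-q^n)+q^{-n(n+5)/2}(1-q^{n+1})\right)}{1-q},\qquad\beta_n=\frac{(-1)^nq^{-n(n+5)/2}}{(q;q)_n}\qquad(n\ge0)$$ form a Bailey pair relative to $a=q$, i.e. $\beta_n=\sum_{r=0}^n\frac{\alpha_r}{(q;q)_{n-r}(q^2;q)_{n+r}}$ for all $n\ge0$.
   Context: $(a;q)_n=\prod_{k=0}^{n-1}(1-aq^k)$ with $(a;q)_0=1$. A Bailey pair relative to $a$ is a pair of sequences with $\beta_n=\sum_{r=0}^n\frac{\alpha_r}{(q;q)_{n-r}(aq;q)_{n+r}}$ for all $n\ge0$. *)

From HB Require Import structures.
From mathcomp Require Import all_boot all_order all_algebra.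
Set Implicit Arguments. Unset Strict Implicit. Unset Printing Implicit Defensive.
Import Order.TTheory GRing.Theory Num.Theory.
Local Open Scope ring_scope.

Definition qpoch (R : nzRingType) (a q : R) (n : nat) : R :=
  \prod_(k < n) (1 - a * q ^+ k).

Definition bailey_pair (R : fieldType) (a q : R) (alpha beta : nat -> R) : Prop :=
  forall n : nat,
    beta n = \sum_(r < n.+1)
               alpha r / (qpoch q q (n - r) * qpoch (a * q) q (n + r)).

(* Integer exponents: (-n^2+n+4)/2 = 2 - n(n-1)/2  and  -n(n+5)/2,
   both exact integers. *)
Definition expo1 (n : nat) : int := 2%:Z - ((n * n.-1)./2)%:Z.
Definition expo2 (n : nat) : int := - ((n * (n + 5))./2)%:Z.

Definition alpha11 (R : fieldType) (q : R) (n : nat) : R :=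
  (-1) ^+ n * (q ^ expo1 n * (1 - q ^+ n) + q ^ expo2 n * (1 - q ^+ n.+1))
  / (1 - q).

Definition beta11 (R : fieldType) (q : R) (n : nat) : R :=
  (-1) ^+ n * q ^ expo2 n / qpoch q q n.

(* Both sides satisfy the first-order recurrence
   (1 - q^(n+1)) X_(n+1) + q^-(n+3) X_n = 0 and agree at n = 0.  For beta this
   is immediate from n(n+5)/2 + n + 3 = (n+1)(n+6)/2.  For the Bailey sum
   S_n = sum_r F(n, r) it follows by telescoping from the q-WZ identity
   (1 - q^(n+1)) F(n+1, r) + q^-(n+3) F(n, r) = G(n, r+1) - G(n, r)
   for r <= n, whose boundary terms G(n, 0) and
   (1 - q^(n+1)) F(n+1, n+1) + G(n, n+1) vanish. *)

From HB Require Import structures.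
From mathcomp Require Import all_boot all_order all_algebra.
From mathcomp Require Import ring zify.
Set Implicit Arguments. Unset Strict Implicit. Unset Printing Implicit Defensive.
Import Order.TTheory GRing.Theory Num.Theory.
Local Open Scope ring_scope.

Definition neg_expo2 (n : nat) : nat := (n * (n + 5))./2.

Lemma neg_expo2S n : neg_expo2 n.+1 = (neg_expo2 n + n + 3)%N.
Proof.
rewrite /neg_expo2 -!divn2.
have -> : (n.+1 * (n.+1 + 5) = n * (n + 5) + (n + 3) * 2)%N by ring.
by rewrite divnDr ?dvdn_mull // mulnK // addnA.
Qed.

Lemma neg_expo2_bin2 n : neg_expo2 n = ('C(n, 2) + n * 3)%N.
Proof.
rewrite /neg_expo2 bin2 -!divn2; case: n => [//|n] /=.
have -> : (n.+1 * (n.+1 + 5) = n.+1 * n + (n.+1 * 3) * 2)%N by ring.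
by rewrite divnDr ?dvdn_mull // mulnK.
Qed.

Section FirstOrderRecurrence.
Variable R : fieldType.

Lemma eq_first_order_rec (c d u v : nat -> R) :
    (forall n, c n != 0) ->
    (forall n, c n * u n.+1 + d n * u n = 0) ->
    (forall n, c n * v n.+1 + d n * v n = 0) ->
  u 0%N = v 0%N -> forall n, u n = v n.
Proof.
move=> c_neq0 rec_u rec_v eq0; elim=> // n IH.
apply: (mulfI (c_neq0 n)); apply: (addIr (d n * u n)).
by rewrite rec_u IH rec_v.
Qed.

End FirstOrderRecurrence.

Section BaileyPair.
Variables (R : fieldType) (q : R).
Hypothesis q_neq0 : q != 0.
Hypothesis q_not_unity : forall k, q ^+ k.+1 != 1.

Local Notation P := (qpoch q q).

Lemma subr1X_neq0 k : 1 - q ^+ k.+1 != 0.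
Proof. by rewrite subr_eq0 eq_sym q_not_unity. Qed.

Lemma subr1q_neq0 : 1 - q != 0.
Proof. by have := subr1X_neq0 0; rewrite expr1. Qed.

Lemma expq_neq0 k : q ^+ k != 0.
Proof. exact: expf_neq0. Qed.

Lemma qpoch0 (a : R) : qpoch a q 0 = 1.
Proof. by rewrite /qpoch big_ord0. Qed.

Lemma qpochS m : P m.+1 = P m * (1 - q ^+ m.+1).
Proof. by rewrite /qpoch big_ord_recr /= -exprS. Qed.

Lemma qpoch_neq0 m : P m != 0.
Proof.
elim: m => [|m IH]; first by rewrite qpoch0 oner_neq0.
by rewrite qpochS mulf_neq0 // subr1X_neq0.
Qed.

Lemma qpoch_qq m : qpoch (q * q) q m = P m.+1 / (1 - q).
Proof.
rewrite /qpoch big_ord_recl /= expr0 mulr1 [(1 - q) * _]mulrC mulfK ?subr1q_neq0 //.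
by apply: eq_bigr => i _; rewrite /bump /= add1n exprS mulrA.
Qed.

Lemma expq_expo2 n : q ^ expo2 n = (q ^+ neg_expo2 n)^-1.
Proof. by rewrite /expo2 -invr_expz. Qed.

Lemma expq_expo1 n : q ^ expo1 n = q ^+ 2 * (q ^+ neg_expo2 n)^-1 * q ^+ (n * 3).
Proof.
rewrite /expo1 expfzDr // -invr_expz neg_expo2_bin2 bin2 exprD -!exprnP.
by field; rewrite !expq_neq0.
Qed.

Lemma alpha11E r : alpha11 q r = (-1) ^+ r *
  (q ^+ 2 * (q ^+ neg_expo2 r)^-1 * q ^+ (r * 3) * (1 - q ^+ r)
   + (q ^+ neg_expo2 r)^-1 * (1 - q ^+ r.+1)) / (1 - q).
Proof. by rewrite /alpha11 expq_expo1 expq_expo2. Qed.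

Lemma beta11S n :
  (1 - q ^+ n.+1) * beta11 q n.+1 + (q ^+ (n + 3))^-1 * beta11 q n = 0.
Proof.
rewrite /beta11 !expq_expo2 neg_expo2S qpochS !exprD !exprS.
have := subr1X_neq0 n; have := qpoch_neq0 n.
have := expq_neq0 n; have := expq_neq0 (neg_expo2 n); rewrite exprS.
move: (P n) (q ^+ n) (q ^+ neg_expo2 n) => p u w w_neq0 u_neq0 p_neq0 nz.
by field; rewrite w_neq0 u_neq0 p_neq0 nz q_neq0.
Qed.

Definition bailey_term n r :=
  alpha11 q r / (P (n - r) * qpoch (q * q) q (n + r)).

Definition bailey_cert n r :=
  (-1) ^+ r.+1 * (1 - q ^+ r) * (q ^+ neg_expo2 r)^-1
    / (P (n.+1 - r) * P (n + r + 2)) *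
  ((1 - q ^+ r.+1) * (q ^+ (n.+1 - r))^-1 + q ^+ (r * 3 + 2) * (1 - q ^+ n.+1)
   + q ^+ (r * 2) * (q ^+ (n.+1 - r))^-1 * (1 - q ^+ (n.+1 - r))
       * (1 - q ^+ (n + r + 2))).

Lemma bailey_cert0 n : bailey_cert n 0 = 0.
Proof. by rewrite /bailey_cert expr0 subrr !(mulr0, mul0r). Qed.

Lemma bailey_term_telescope n r : (r <= n)%N ->
    (1 - q ^+ n.+1) * bailey_term n.+1 r + (q ^+ (n + 3))^-1 * bailey_term n r
  = bailey_cert n r.+1 - bailey_cert n r.
Proof.
move=> le_rn; have [m ->] : exists m, n = (m + r)%N by exists (n - r)%N; rewrite subnK.
rewrite /bailey_term /bailey_cert alpha11E !qpoch_qq.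
have -> : ((m + r).+1 - r = m.+1)%N by lia.
have -> : ((m + r) - r = m)%N by lia.
have -> : ((m + r).+1 - r.+1 = m)%N by lia.
have -> : (((m + r).+1 + r).+1 = (m + r + r).+2)%N by lia.
have -> : ((m + r + r.+1 + 2) = (m + r + r).+3)%N by lia.
have -> : ((m + r + r + 2) = (m + r + r).+2)%N by lia.
rewrite !qpochS neg_expo2S.
have := subr1X_neq0 m; have := subr1X_neq0 (m + r + r).
have := subr1X_neq0 (m + r + r).+1; have := subr1X_neq0 (m + r + r).+2.
have := qpoch_neq0 m; have := qpoch_neq0 (m + r + r).
have := expq_neq0 m; have := expq_neq0 r; have := expq_neq0 (neg_expo2 r).
rewrite !(exprD, exprM, exprS) ?expr0.
move: (P m) (P (m + r + r)) (q ^+ m) (q ^+ r) (q ^+ neg_expo2 r).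
move=> p1 p2 u v w w_neq0 v_neq0 u_neq0 p2_neq0 p1_neq0 nz1 nz2 nz3 nz4.
have nz5 := subr1q_neq0.
field.
by rewrite nz1 nz2 nz3 nz4 nz5 p1_neq0 p2_neq0 u_neq0 v_neq0 w_neq0 q_neq0.
Qed.

Lemma bailey_term_last n :
  (1 - q ^+ n.+1) * bailey_term n.+1 n.+1 + bailey_cert n n.+1 = 0.
Proof.
rewrite /bailey_term /bailey_cert alpha11E qpoch_qq !subnn qpoch0 expr0 subrr.
have -> : ((n.+1 + n.+1).+1 = (n + n).+3)%N by lia.
have -> : ((n + n.+1 + 2) = (n + n).+3)%N by lia.
have := qpoch_neq0 (n + n).+3; have := expq_neq0 (neg_expo2 n.+1).
rewrite !(exprD, exprM, exprS) ?expr0.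
move: (P (n + n).+3) (q ^+ neg_expo2 n.+1) => p w w_neq0 p_neq0.
by field; rewrite p_neq0 w_neq0 subr1q_neq0 oner_neq0.
Qed.

Lemma bailey_sum_rec n :
    (1 - q ^+ n.+1) * (\sum_(r < n.+2) bailey_term n.+1 r)
  + (q ^+ (n + 3))^-1 * (\sum_(r < n.+1) bailey_term n r) = 0.
Proof.
rewrite big_ord_recr /= mulrDr -addrA [_ * bailey_term _ _ + _]addrC addrA.
rewrite !mulr_sumr -big_split /=.
rewrite (eq_bigr (fun r : 'I_n.+1 => bailey_cert n r.+1 - bailey_cert n r)); last first.
  by move=> r _; rewrite bailey_term_telescope // -ltnS.
rewrite -(big_mkord xpredT (fun r => bailey_cert n r.+1 - bailey_cert n r)).
by rewrite telescope_sumr // bailey_cert0 subr0 addrC bailey_term_last.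
Qed.

Lemma bailey_sum0 : \sum_(r < 1) bailey_term 0 r = beta11 q 0.
Proof.
rewrite big_ord1 /bailey_term /beta11 alpha11E expq_expo2 /= !qpoch0.
rewrite /neg_expo2 /= !expr0 !expr1 invr1.
by field; rewrite oner_neq0 subr1q_neq0.
Qed.

Lemma bailey_pair_alpha11_beta11 : bailey_pair q q (alpha11 q) (beta11 q).
Proof.
move=> n; symmetry; move: n.
apply: (@eq_first_order_rec _ (fun n => 1 - q ^+ n.+1) (fun n => (q ^+ (n + 3))^-1)
          (fun n => \sum_(r < n.+1) bailey_term n r) (beta11 q)).
- exact: subr1X_neq0.
- exact: bailey_sum_rec.
- exact: beta11S.
- exact: bailey_sum0.
Qed.

End BaileyPair.

Theorem mainTheorem11 (R : numFieldType) (q : R)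
    (hq0 : 0 < `|q|) (hq1 : `|q| < 1) :
  bailey_pair q q (alpha11 q) (beta11 q).
Proof.
apply: bailey_pair_alpha11_beta11; first by rewrite -normr_gt0.
move=> k; apply/eqP => qk1.
have : `|q| ^+ k.+1 < 1 by rewrite exprn_ilt1.
by rewrite -normrX qk1 normr1 ltxx.
Qed.
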